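(* Let $A$ be a finite-vertex graph, $\mathsf V$ a pseudovariety of semigroupoids containing $\mathsf N$, and $L\subseteq E(A^+)$ a factorial language. Suppose that $L$ is $\mathsf V$-recognizable or that $\mathsf V$ is concatenation-closed. Then the closure $\overline{L}$ of $L$ in $\overline{\Omega}_A\mathsf V$ is factorial in $\overline{\Omega}_A\mathsf V$: whenever $w=uv\in\overline L$ with $u,v$ edges of $\overline{\Omega}_A\mathsf V$, we have $u,v\in\overline L$.
   Context: A graph has vertices, edges and source/range maps; finite-vertex means finitely many vertices. Pseudovarieties of semigroupoids are classes of finite semigroupoids closed under divisors, finite direct products and finite coproducts; $\mathsf N$ is the pseudovariety of finite nilpotent semigroups. $\overline{\Omega}_A\mathsf V$ is the free pro-$\mathsf V$ semigroupoid over $A$; for $\mathsf V\supseteq\mathsf N$ the free semigroupoid $A^+$ of nonempty paths is identified with a dense subsemigroupoid of isolated points of it. A language $L\subseteq E(A^+)$ is factorial if $uv\in L$ implies $u,v\in L$; it is $\mathsf V$-recognizable if $L=\varphi^{-1}\varphi(L)$ for some homomorphism $\varphi\colon A^+\to F$, $F\in\mathsf V$. $\mathsf V$ is concatenation-closed if for every finite graph $A$ the $\mathsf V$-recognizable languages over $A$ are closed under concatenation (composable products $uv$ with $u\in L$, $v\in K$). *)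

From Stdlib Require List.
From mathcomp Require Import all_boot.
Set Implicit Arguments. Unset Strict Implicit. Unset Printing Implicit Defensive.

(* Finite semigroupoids.  Composition x y is meaningful (x : a -> b,         *)
(* y : b -> c) when scod x = sdom y; values on non-composable pairs are junk. *)
Record sgd := Sgd {
  sV : finType;
  sE : finType;
  sdom : sE -> sV;
  scod : sE -> sV;
  smul : sE -> sE -> sE;
  smul_dom : forall x y, scod x = sdom y -> sdom (smul x y) = sdom x;
  smul_cod : forall x y, scod x = sdom y -> scod (smul x y) = scod y;
  smul_assoc : forall x y z, scod x = sdom y -> scod y = sdom z ->
      smul (smul x y) z = smul x (smul y z) }.

Record shom (S T : sgd) := SHom {
  hmV : sV S -> sV T;
  hmE : sE S -> sE T;
  hm_dom : forall x, sdom (hmE x) = hmV (sdom x);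
  hm_cod : forall x, scod (hmE x) = hmV (scod x);
  hm_mul : forall x y, scod x = sdom y -> hmE (smul x y) = smul (hmE x) (hmE y) }.

Definition quotient_hom (S T : sgd) (f : shom S T) :=
  bijective (hmV f) /\ forall y : sE T, exists x, hmE f x = y.

Definition faithful_hom (S T : sgd) (f : shom S T) :=
  forall x y : sE S, sdom x = sdom y -> scod x = scod y -> hmE f x = hmE f y -> x = y.

Definition divides (S T : sgd) :=
  exists (R : sgd) (f : shom R S) (g : shom R T), quotient_hom f /\ faithful_hom g.

Section Prod.
Variables S T : sgd.
Definition pdom' (x : sE S * sE T) : sV S * sV T := (sdom x.1, sdom x.2).
Definition pcod' (x : sE S * sE T) : sV S * sV T := (scod x.1, scod x.2).
Definition pmul' (x y : sE S * sE T) : sE S * sE T := (smul x.1 y.1, smul x.2 y.2).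
Lemma pmul_dom x y : pcod' x = pdom' y -> pdom' (pmul' x y) = pdom' x.
Proof. by case=> h1 h2; rewrite /pdom' /= !smul_dom. Qed.
Lemma pmul_cod x y : pcod' x = pdom' y -> pcod' (pmul' x y) = pcod' y.
Proof. by case=> h1 h2; rewrite /pcod' /= !smul_cod. Qed.
Lemma pmul_assoc x y z : pcod' x = pdom' y -> pcod' y = pdom' z ->
  pmul' (pmul' x y) z = pmul' x (pmul' y z).
Proof. by case=> h1 h2 [h3 h4]; rewrite /pmul' /= !smul_assoc. Qed.
Definition prod_sgd : sgd :=
  @Sgd (sV S * sV T)%type (sE S * sE T)%type
       pdom' pcod' pmul' pmul_dom pmul_cod pmul_assoc.
End Prod.

Section Coprod.
Variables S T : sgd.
Definition cdom (x : sE S + sE T) : sV S + sV T :=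
  match x with inl a => inl (sdom a) | inr b => inr (sdom b) end.
Definition ccod (x : sE S + sE T) : sV S + sV T :=
  match x with inl a => inl (scod a) | inr b => inr (scod b) end.
Definition cmul (x y : sE S + sE T) : sE S + sE T :=
  match x, y with
  | inl a, inl b => inl (smul a b)
  | inr a, inr b => inr (smul a b)
  | _, _ => x end.
Lemma cmul_dom x y : ccod x = cdom y -> cdom (cmul x y) = cdom x.
Proof. by case: x; case: y => //= a b [] h; rewrite smul_dom. Qed.
Lemma cmul_cod x y : ccod x = cdom y -> ccod (cmul x y) = ccod y.
Proof. by case: x; case: y => //= a b [] h; rewrite smul_cod. Qed.
Lemma cmul_assoc x y z : ccod x = cdom y -> ccod y = cdom z ->
  cmul (cmul x y) z = cmul x (cmul y z).
Proof.
by case: x; case: y; case: z => //= a b c [] h1 [] h2; rewrite smul_assoc.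
Qed.
Definition coprod_sgd : sgd :=
  @Sgd (sV S + sV T)%type (sE S + sE T)%type
       cdom ccod cmul cmul_dom cmul_cod cmul_assoc.
End Coprod.

(* Pseudovariety of semigroupoids: closed under divisors, finite direct
   products and finite coproducts (binary ones suffice; the trivial and empty
   semigroupoids are divisors of any member). *)
Definition pseudovariety (V : sgd -> Prop) :=
  [/\ forall S T, V T -> divides S T -> V S,
      forall S T, V S -> V T -> V (prod_sgd S T)
    & forall S T, V S -> V T -> V (coprod_sgd S T)].

Definition nilpotent_semigroup (S : sgd) :=
  #|sV S| = 1 /\
  exists z : sE S, (forall x, smul z x = z /\ smul x z = z) /\
    exists n : nat, forall (x : sE S) (s : seq (sE S)), size s = n -> foldl (@smul S) x s = z.

Definition contains_N (V : sgd -> Prop) := forall S, nilpotent_semigroup S -> V S.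

Record graph := Graph {
  gV : finType;
  gE : Type;
  gdom : gE -> gV;
  gcod : gE -> gV }.

Definition finite_graph (A : graph) := exists s : seq (gE A), forall e, List.In e s.

(* Edges of A^+ : nonempty paths e_1 ... e_n with gcod e_i = gdom e_(i+1),
   represented as sequences of edges of A. *)
Definition adj (A : graph) : rel (gE A) := fun x y => gcod x == gdom y.
Definition valid (A : graph) (w : seq (gE A)) : bool :=
  if w is e :: w' then path (@adj A) e w' else false.

(* Homomorphisms A^+ -> F (only their values on genuine paths matter). *)
Record homA (A : graph) (F : sgd) := HomA {
  hv : gV A -> sV F;
  he : seq (gE A) -> sE F;
  homA_dom : forall e w, valid (e :: w) -> sdom (he (e :: w)) = hv (gdom e);
  homA_cod : forall e w, valid (e :: w) -> scod (he (e :: w)) = hv (gcod (last e w));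
  homA_mul : forall u v, valid u -> valid v -> valid (u ++ v) ->
               he (u ++ v) = smul (he u) (he v) }.

Definition language (A : graph) (L : seq (gE A) -> Prop) := forall w, L w -> valid w.

Definition factorial_lang (A : graph) (L : seq (gE A) -> Prop) :=
  forall u v : seq (gE A), u <> [::] -> v <> [::] -> L (u ++ v) -> L u /\ L v.

Definition recognizable (V : sgd -> Prop) (A : graph) (L : seq (gE A) -> Prop) :=
  exists (F : sgd) (_ : V F) (phi : homA A F),
    forall w, valid w -> (L w <-> exists l, L l /\ he phi l = he phi w).

Definition concat (A : graph) (K1 K2 : seq (gE A) -> Prop) : seq (gE A) -> Prop :=
  fun w => valid w /\ exists u v, [/\ K1 u, K2 v & w = u ++ v].

Definition concat_closed (V : sgd -> Prop) :=
  forall B : graph, finite_graph B ->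
  forall K1 K2 : seq (gE B) -> Prop, language K1 -> language K2 ->
    recognizable V K1 -> recognizable V K2 -> recognizable V (concat K1 K2).

(* The free pro-V semigroupoid over A: vertices are those of A; an edge is a
   compatible family (x_phi) indexed by all homomorphisms phi : A^+ -> F with
   F in V (the inverse limit of the finite V-images of A^+). *)
Definition agrees (A : graph) (F G : sgd) (phi : homA A F) (psi : shom F G)
  (phi' : homA A G) :=
  (forall a, hv phi' a = hmV psi (hv phi a)) /\
  (forall w, valid w -> he phi' w = hmE psi (he phi w)).

Record pro_edge (A : graph) (V : sgd -> Prop) := ProEdge {
  pe_dom : gV A;
  pe_cod : gV A;
  pe_val : forall (F : sgd), V F -> homA A F -> sE F;
  pe_ends : forall F (HF : V F) (phi : homA A F),
      sdom (pe_val HF phi) = hv phi pe_dom /\ scod (pe_val HF phi) = hv phi pe_cod;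
  pe_compat : forall F G (HF : V F) (HG : V G) (phi : homA A F) (psi : shom F G)
      (phi' : homA A G), agrees phi psi phi' ->
      pe_val HG phi' = hmE psi (pe_val HF phi) }.

Section ProMul.
Variables (A : graph) (V : sgd -> Prop) (u v : pro_edge A V).
Hypothesis Huv : pe_cod u = pe_dom v.
Definition pro_mul_val F (HF : V F) (phi : homA A F) : sE F :=
  smul (pe_val u HF phi) (pe_val v HF phi).
Lemma pro_mul_comp F (HF : V F) (phi : homA A F) :
  scod (pe_val u HF phi) = sdom (pe_val v HF phi).
Proof. by rewrite (pe_ends u HF phi).2 (pe_ends v HF phi).1 Huv. Qed.
Lemma pro_mul_ends F (HF : V F) (phi : homA A F) :
  sdom (pro_mul_val HF phi) = hv phi (pe_dom u) /\
  scod (pro_mul_val HF phi) = hv phi (pe_cod v).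
Proof.
rewrite /pro_mul_val smul_dom ?smul_cod ?pro_mul_comp //.
by rewrite (pe_ends u HF phi).1 (pe_ends v HF phi).2.
Qed.
Lemma pro_mul_compat F G (HF : V F) (HG : V G) (phi : homA A F) (psi : shom F G)
  (phi' : homA A G) : agrees phi psi phi' ->
  pro_mul_val HG phi' = hmE psi (pro_mul_val HF phi).
Proof.
move=> H; rewrite /pro_mul_val (pe_compat u HF HG H) (pe_compat v HF HG H).
by rewrite hm_mul // pro_mul_comp.
Qed.
Definition pro_mul : pro_edge A V :=
  @ProEdge A V (pe_dom u) (pe_cod v) pro_mul_val pro_mul_ends pro_mul_compat.
End ProMul.

Definition pdom (A : graph) (w : seq (gE A)) : option (gV A) :=
  if w is e :: _ then Some (gdom e) else None.
Definition pcod (A : graph) (w : seq (gE A)) : option (gV A) :=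
  if w is e :: w' then Some (gcod (last e w')) else None.

(* Closure of L (embedded via l |-> (phi |-> phi(l))) in the free pro-V
   semigroupoid, for the inverse-limit topology: every basic open
   neighbourhood of x, i.e. a finite intersection of sets
   {y | y_phi = x_phi} (together with the clopen conditions fixing the
   endpoints), meets L. *)
Definition test (A : graph) (V : sgd -> Prop) := {F : sgd & {_ : V F & homA A F}}.

Definition in_closure (A : graph) (V : sgd -> Prop) (L : seq (gE A) -> Prop)
  (x : pro_edge A V) :=
  forall ts : seq (test A V), exists l, [/\ L l, pdom l = Some (pe_dom x),
    pcod l = Some (pe_cod x) &
    forall t, List.In t ts -> he (projT2 (projT2 t)) l = pe_val x (projT1 (projT2 t)) (projT2 (projT2 t))].

From Stdlib Require Import ClassicalEpsilon.
From mathcomp Require Import all_boot.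
Set Implicit Arguments. Unset Strict Implicit. Unset Printing Implicit Defensive.

(* A^+ is dense in the free pro-V semigroupoid: for each
   phi : A^+ -> F, the value x_phi of a pro-edge x lies in the image of A^+,
   because the image of A^+ under phi paired with the endpoint map is a
   subsemigroupoid dividing a member of V (this is where N <= V is used).
   Hence, to see that u and v lie in the closure of L when uv does, it is
   enough to find, for each phi, words of L with phi-values u_phi and v_phi.
   Approximate u and v by words w_u, w_v, simultaneously for phi and for one
   more homomorphism psi, and pick l in L with psi(l) = psi(w_u w_v).  If psi
   recognizes L, then w_u w_v lies in L and factoriality splits it.  If V is
   concatenation-closed, rewrite words over the finite graph of "phi-letters"
   and let psi recognize the product of the phi-fibres of u_phi and v_phi:
   then l itself factors as l_1 l_2 with phi(l_1) = u_phi, phi(l_2) = v_phi,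
   and factoriality gives l_1, l_2 in L. *)

Definition asbool (P : Prop) : bool :=
  if excluded_middle_informative P then true else false.

Lemma asboolP (P : Prop) : reflect P (asbool P).
Proof. by rewrite /asbool; case: excluded_middle_informative => h; constructor. Qed.

Lemma In_enum (T : finType) (x : T) : List.In x (enum T).
Proof.
have : x \in enum T by rewrite mem_enum.
elim: (enum T) => [|y s IH] //=; rewrite in_cons => /orP [/eqP ->|/IH]; by [left|right].
Qed.

Lemma valid_map (B A : graph) (fv : gV B -> gV A) (fe : gE B -> gE A) :
  (forall e, gdom (fe e) = fv (gdom e)) -> (forall e, gcod (fe e) = fv (gcod e)) ->
  forall w, valid w -> valid (map fe w).
Proof.
move=> fe_dom fe_cod [|e w] //= hw; rewrite path_map.
by apply: sub_path hw => x y /eqP h; rewrite /relpre /adj /= fe_dom fe_cod h.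
Qed.

Lemma map_eq_cat (S T : Type) (f : S -> T) (l : seq S) (k1 k2 : seq T) :
  map f l = k1 ++ k2 -> exists l1 l2, [/\ l = l1 ++ l2, map f l1 = k1 & map f l2 = k2].
Proof.
move=> hl; exists (take (size k1) l), (drop (size k1) l).
by rewrite cat_take_drop map_take map_drop hl take_size_cat // drop_size_cat.
Qed.

Section Paths.
Variable A : graph.
Implicit Types u v w : seq (gE A).

Lemma valid_nonnil w : valid w -> w <> [::].
Proof. by case: w. Qed.

Lemma valid_cat u v : valid u -> valid v -> pcod u = pdom v -> valid (u ++ v).
Proof.
case: u => [|e u] //; case: v => [|f v] //= hu hv [] huv.
by rewrite cat_path hu /= /adj huv eqxx hv.
Qed.

Lemma valid_cat_inv u v : u <> [::] -> v <> [::] -> valid (u ++ v) ->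
  [/\ valid u, valid v & pcod u = pdom v].
Proof.
case: u => [|e u] // _; case: v => [|f v] // _ /=.
by rewrite cat_path /= => /and3P [hu /eqP huv hv]; rewrite huv.
Qed.

Lemma homA_composable (F : sgd) (phi : homA A F) u v :
  valid u -> valid v -> pcod u = pdom v -> scod (he phi u) = sdom (he phi v).
Proof.
case: u => [|e u] //; case: v => [|f v] //= hu hv [] huv.
by rewrite homA_cod // homA_dom // huv.
Qed.

Lemma homA_eq_on_letters (F : sgd) (p q : homA A F) :
  (forall e, he p [:: e] = he q [:: e]) -> forall w, valid w -> he p w = he q w.
Proof.
move=> letters [|e w] // hw; elim: w e hw => [|f w IH] e hew; first exact: letters.
have hfw : valid (f :: w) by case/andP: hew.
by rewrite -[e :: f :: w]cat1s !homA_mul // letters IH.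
Qed.
End Paths.

Section Comap.
Variables (B A : graph) (fv : gV B -> gV A) (fe : gE B -> gE A).
Hypotheses (fe_dom : forall e, gdom (fe e) = fv (gdom e))
           (fe_cod : forall e, gcod (fe e) = fv (gcod e)).

Variables (F : sgd) (phi : homA A F).

Let valid_map_fe := valid_map fe_dom fe_cod.

Lemma comap_dom e w : valid (e :: w) ->
  sdom (he phi (map fe (e :: w))) = hv phi (fv (gdom e)).
Proof. by move=> /valid_map_fe hw; rewrite homA_dom // fe_dom. Qed.

Lemma comap_cod e w : valid (e :: w) ->
  scod (he phi (map fe (e :: w))) = hv phi (fv (gcod (last e w))).
Proof. by move=> /valid_map_fe hw; rewrite homA_cod // last_map fe_cod. Qed.

Lemma comap_mul u v : valid u -> valid v -> valid (u ++ v) ->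
  he phi (map fe (u ++ v)) = smul (he phi (map fe u)) (he phi (map fe v)).
Proof.
move=> /valid_map_fe hu /valid_map_fe hv /valid_map_fe; rewrite !map_cat => huv.
exact: homA_mul.
Qed.

Definition comap : homA B F :=
  @HomA B F (fun a => hv phi (fv a)) (fun w => he phi (map fe w))
    comap_dom comap_cod comap_mul.
End Comap.

Section Morphisms.
Variables S T U : sgd.

Definition id_shom : shom S S :=
  @SHom S S id id (fun _ => erefl) (fun _ => erefl) (fun _ _ _ => erefl).

Definition comp_shom (f : shom S T) (g : shom T U) : shom S U.
Proof.
refine (@SHom S U (fun a => hmV g (hmV f a)) (fun x => hmE g (hmE f x)) _ _ _).
- by move=> x; rewrite !hm_dom.
- by move=> x; rewrite !hm_cod.
- by move=> x y h; rewrite !hm_mul // hm_dom hm_cod h.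
Defined.

Definition fst_shom : shom (prod_sgd S T) S :=
  @SHom (prod_sgd S T) S fst fst (fun _ => erefl) (fun _ => erefl)
    (fun x y (h : pcod' x = pdom' y) => erefl).

Definition snd_shom : shom (prod_sgd S T) T :=
  @SHom (prod_sgd S T) T snd snd (fun _ => erefl) (fun _ => erefl)
    (fun x y (h : pcod' x = pdom' y) => erefl).
End Morphisms.

Definition unit_sgd : sgd :=
  @Sgd unit unit (fun _ => tt) (fun _ => tt) (fun _ _ => tt)
    (fun _ _ _ => erefl) (fun _ _ _ => erefl) (fun _ _ _ _ _ => erefl).

Lemma unit_sgd_in (V : sgd -> Prop) : contains_N V -> V unit_sgd.
Proof.
move=> HN; apply: HN; split; first by rewrite card_unit.
by exists tt; split; [case | exists 0 => x s /size0nil ->; case: x].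
Qed.

Definition indiscrete_sgd (T : finType) : sgd :=
  @Sgd T (T * T)%type fst snd (fun x y => (x.1, y.2))
    (fun _ _ _ => erefl) (fun _ _ _ => erefl) (fun _ _ _ _ _ => erefl).

Lemma indiscrete_sgd_in (V : sgd -> Prop) (T : finType) :
  pseudovariety V -> contains_N V -> V (indiscrete_sgd T).
Proof.
move=> [Hdiv _ _] HN; apply: (Hdiv _ _ (unit_sgd_in HN)).
pose to_unit := @SHom (indiscrete_sgd T) unit_sgd (fun _ => tt) (fun _ => tt)
  (fun _ => erefl) (fun _ => erefl) (fun _ _ _ => erefl).
exists (indiscrete_sgd T), (id_shom _), to_unit; split.
  by split => [|y]; [exists id | exists y].
by move=> [a b] [c d] /= -> ->.
Qed.

Section HomsFromPaths.
Variable A : graph.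

Definition pair_homA (F G : sgd) (p : homA A F) (q : homA A G) :
  homA A (prod_sgd F G).
Proof.
refine (@HomA A (prod_sgd F G) (fun a => (hv p a, hv q a))
          (fun w => (he p w, he q w)) _ _ _).
- by move=> e w h; rewrite /= /pdom' /= !homA_dom.
- by move=> e w h; rewrite /= /pcod' /= !homA_cod.
- by move=> u v hu hv huv; rewrite /= /pmul' /= !homA_mul.
Defined.

Lemma agrees_comp (F G H : sgd) (p : homA A F) (q : homA A G) (r : homA A H)
  (f : shom F G) (g : shom G H) :
  agrees p f q -> agrees q g r -> agrees p (comp_shom f g) r.
Proof.
move=> [fv fe] [gv ge]; split => [a|w hw] /=; first by rewrite gv fv.
by rewrite ge // fe.
Qed.

Variable d : gV A.

Definition first_vertex (w : seq (gE A)) := if w is e :: _ then gdom e else d.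
Definition last_vertex (w : seq (gE A)) := if w is e :: w' then gcod (last e w') else d.

Definition endpoints_homA : homA A (indiscrete_sgd (gV A)).
Proof.
refine (@HomA A (indiscrete_sgd (gV A)) id
          (fun w => (first_vertex w, last_vertex w)) _ _ _) => //.
by case=> [|e u] [|f v] //= _ _ _; rewrite last_cat.
Defined.
End HomsFromPaths.

Section Tests.
Variables (A : graph) (V : sgd -> Prop).
Implicit Types t : test A V.

Definition tF t : sgd := projT1 t.
Definition tH t : V (tF t) := projT1 (projT2 t).
Definition tp t : homA A (tF t) := projT2 (projT2 t).
Definition mk_test (F : sgd) (HF : V F) (phi : homA A F) : test A V :=
  existT _ F (existT _ HF phi).

Definition refines (T t : test A V) :=
  exists f : shom (tF T) (tF t), agrees (tp T) f (tp t).

Lemma common_refinement : pseudovariety V ->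
  forall t0 ts, exists T, forall t, List.In t (t0 :: ts) -> refines T t.
Proof.
move=> [_ Hprod _] t0; elim=> [|t1 ts [T HT]].
  by exists t0 => t [<-|//]; exists (id_shom _).
exists (mk_test (Hprod _ _ (tH t1) (tH T)) (pair_homA (tp t1) (tp T))).
move=> t [<-|[<-|ht]].
- have [f hf] := HT t0 (or_introl erefl).
  by exists (comp_shom (@snd_shom _ _) f); apply: agrees_comp hf.
- by exists (@fst_shom _ _).
- have [f hf] := HT t (or_intror ht).
  by exists (comp_shom (@snd_shom _ _) f); apply: agrees_comp hf.
Qed.

Lemma refines_value (x : pro_edge A V) T t w : refines T t -> valid w ->
  he (tp T) w = pe_val x (tH T) (tp T) -> he (tp t) w = pe_val x (tH t) (tp t).
Proof.
by move=> [f hf] hw hT; rewrite (proj2 hf) // hT (pe_compat x (tH T) (tH t) hf).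
Qed.

Lemma endpoints_value (x : pro_edge A V) (H : V (indiscrete_sgd (gV A))) w :
  valid w -> he (endpoints_homA (pe_dom x)) w = pe_val x H (endpoints_homA (pe_dom x)) ->
  pdom w = Some (pe_dom x) /\ pcod w = Some (pe_cod x).
Proof.
case: w => [|e w] // _ hw; have [hd hc] := pe_ends x H (endpoints_homA (pe_dom x)).
by rewrite -hw in hd hc; split; congr Some.
Qed.

Lemma values_attained_together (HV : pseudovariety V) (HN : contains_N V)
  (P : seq (gE A) -> Prop) (x : pro_edge A V) :
  (forall w, P w -> valid w) ->
  (forall F (HF : V F) (phi : homA A F), exists2 w, P w & he phi w = pe_val x HF phi) ->
  forall ts : seq (test A V), exists w, [/\ P w, pdom w = Some (pe_dom x),
    pcod w = Some (pe_cod x) &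
    forall t, List.In t ts -> he (tp t) w = pe_val x (tH t) (tp t)].
Proof.
move=> HP attained ts; have HB := indiscrete_sgd_in (gV A) HV HN.
have [T HT] := common_refinement HV (mk_test HB (endpoints_homA (pe_dom x))) ts.
have [w Pw hw] := attained _ (tH T) (tp T); have vw := HP w Pw.
have [hd hc] := endpoints_value vw (refines_value (HT _ (or_introl erefl)) vw hw).
exists w; split=> // t ht; exact: refines_value (HT t (or_intror ht)) vw hw.
Qed.

Lemma in_closure_intro (HV : pseudovariety V) (HN : contains_N V)
  (L : seq (gE A) -> Prop) (x : pro_edge A V) : language L ->
  (forall F (HF : V F) (phi : homA A F), exists2 l, L l & he phi l = pe_val x HF phi) ->
  in_closure L x.
Proof. exact: values_attained_together. Qed.
End Tests.

Section Image.
Variables (A : graph) (G : sgd) (chi : homA A G) (e0 : gE A).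
Hypothesis chi_composable : forall w1 w2, valid w1 -> valid w2 ->
  scod (he chi w1) = sdom (he chi w2) -> valid (w1 ++ w2).

Definition in_image (s : sE G) := exists2 w, valid w & he chi w = s.
Definition image_edge := {s : sE G | asbool (in_image s)}.

Lemma in_image_mul (a b : image_edge) : scod (val a) = sdom (val b) ->
  asbool (in_image (smul (val a) (val b))).
Proof.
case: a b => [a /asboolP [w1 v1 e1]] [b /asboolP [w2 v2 e2]] /= h.
rewrite -e1 -e2 in h *; have v12 := chi_composable v1 v2 h.
by apply/asboolP; exists (w1 ++ w2); rewrite // homA_mul.
Qed.

Definition image_mul (a b : image_edge) : image_edge :=
  if scod (val a) == sdom (val b) then insubd a (smul (val a) (val b)) else a.

Lemma image_mulE a b : scod (val a) = sdom (val b) ->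
  val (image_mul a b) = smul (val a) (val b).
Proof. by move=> h; rewrite /image_mul h eqxx val_insubd in_image_mul. Qed.

Definition image_sgd : sgd.
Proof.
refine (@Sgd (sV G) image_edge (fun a => sdom (val a)) (fun a => scod (val a))
          image_mul _ _ _).
- by move=> x y h; rewrite image_mulE // smul_dom.
- by move=> x y h; rewrite image_mulE // smul_cod.
- move=> x y z hxy hyz; apply: val_inj.
  by rewrite !image_mulE ?smul_dom ?smul_cod // smul_assoc.
Defined.

Definition image_incl : shom image_sgd G :=
  @SHom image_sgd G id val (fun _ => erefl) (fun _ => erefl) image_mulE.

Lemma image_sgd_in (V : sgd -> Prop) : pseudovariety V -> V G -> V image_sgd.
Proof.
move=> [Hdiv _ _] HG; apply: (Hdiv _ _ HG).
exists image_sgd, (id_shom _), image_incl; split.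
  by split => [|y]; [exists id | exists y].
by move=> x y _ _; apply: val_inj.
Qed.

Definition image_default : image_edge :=
  exist _ (he chi [:: e0]) (introT (asboolP _) (ex_intro2 _ _ [:: e0] erefl erefl)).

Definition corestrict (w : seq (gE A)) : image_edge := insubd image_default (he chi w).

Lemma corestrictE w : valid w -> val (corestrict w) = he chi w.
Proof. by move=> hw; rewrite val_insubd; case: asboolP => // -[]; exists w. Qed.

Definition corestrict_homA : homA A image_sgd.
Proof.
refine (@HomA A image_sgd (hv chi) corestrict _ _ _).
- by move=> e w hw /=; rewrite corestrictE // homA_dom.
- by move=> e w hw /=; rewrite corestrictE // homA_cod.
- move=> u v hu hv huv; apply: val_inj.
  have [_ _ hc] := valid_cat_inv (valid_nonnil hu) (valid_nonnil hv) huv.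
  have hc' : scod (val (corestrict u)) = sdom (val (corestrict v)).
    by rewrite !corestrictE // (homA_composable chi hu hv hc).
  by rewrite image_mulE // !corestrictE // homA_mul.
Defined.

Lemma pe_val_in_image (V : sgd -> Prop) (HV : pseudovariety V) (HG : V G)
  (x : pro_edge A V) : in_image (pe_val x HG chi).
Proof.
have HI := image_sgd_in HV HG.
have incl_agrees : agrees corestrict_homA image_incl chi.
  by split => // w hw /=; rewrite corestrictE.
rewrite (pe_compat x HI HG incl_agrees).
by case: (pe_val x HI corestrict_homA) => s /= /asboolP.
Qed.
End Image.

Section Density.
Variables (A : graph) (V : sgd -> Prop) (HV : pseudovariety V) (HN : contains_N V).
Variable e0 : gE A.

(* Pairing with the endpoint map makes composable values come from
   composable words, so the image of A^+ is a subsemigroupoid. *)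
Lemma pe_val_attained (x : pro_edge A V) (F : sgd) (HF : V F) (phi : homA A F) :
  exists2 w, valid w & he phi w = pe_val x HF phi.
Proof.
have HB := indiscrete_sgd_in (gV A) HV HN.
have HG : V (prod_sgd F (indiscrete_sgd (gV A))) by case: HV => _ Hprod _; apply: Hprod.
set chi := pair_homA phi (endpoints_homA (pe_dom x)).
have chi_composable w1 w2 : valid w1 -> valid w2 ->
    scod (he chi w1) = sdom (he chi w2) -> valid (w1 ++ w2).
  case: w1 w2 => [|e1 w1] [|e2 w2] // v1 v2 [] _ h; apply: valid_cat => //=.
  by rewrite h.
have [w hw hchi] := pe_val_in_image e0 chi_composable HV HG x.
exists w => //; apply: (refines_value (T := mk_test HG chi) (t := mk_test HF phi)) hw hchi.
by exists (@fst_shom _ _).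
Qed.

Lemma dense_at_two (x : pro_edge A V) (F : sgd) (HF : V F) (phi : homA A F)
  (F' : sgd) (HF' : V F') (psi : homA A F') :
  exists w, [/\ valid w, pdom w = Some (pe_dom x), pcod w = Some (pe_cod x),
    he phi w = pe_val x HF phi & he psi w = pe_val x HF' psi].
Proof.
have [|w [hw hd hc hts]] := values_attained_together HV HN (P := fun w => valid w)
  (x := x) _ (pe_val_attained x) [:: mk_test HF phi; mk_test HF' psi] => //.
exists w; split => //.
- by apply: (hts (mk_test HF phi)); left.
- by apply: (hts (mk_test HF' psi)); right; left.
Qed.
End Density.

Definition fibre (B : graph) (F : sgd) (phi : homA B F) (s : sE F) : seq (gE B) -> Prop :=
  fun w => valid w /\ he phi w = s.

Lemma fibre_language (B : graph) (F : sgd) (phi : homA B F) (s : sE F) :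
  language (fibre phi s).
Proof. by move=> w []. Qed.

Lemma fibre_recognizable (V : sgd -> Prop) (B : graph) (F : sgd) (HF : V F)
  (phi : homA B F) (s : sE F) : recognizable V (fibre phi s).
Proof.
by exists F, HF, phi => w hw; split => [hs | [l [[_ <-] ->]]]; first exists w.
Qed.

Section LetterGraph.
Variables (A : graph) (F : sgd) (phi : homA A F).

Definition letter_of (e : gE A) : gV A * sE F * gV A := (gdom e, he phi [:: e], gcod e).
Definition is_letter (t : gV A * sE F * gV A) := exists e, letter_of e = t.
Local Notation letter_edge := {t : gV A * sE F * gV A | asbool (is_letter t)}.

Definition letter_graph : graph :=
  @Graph (gV A) letter_edge (fun t => (val t).1.1) (fun t => (val t).2).

Lemma letter_graph_finite : finite_graph letter_graph.
Proof. by exists (enum (@predT letter_edge)) => t; have := In_enum t; rewrite enumT. Qed.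

Definition letter (e : gE A) : gE letter_graph :=
  exist _ (letter_of e) (introT (asboolP _) (ex_intro _ e erefl)).

Definition witness (t : gE letter_graph) : gE A :=
  proj1_sig (constructive_indefinite_description _ (elimT (asboolP _) (valP t))).

Lemma witnessP t : letter_of (witness t) = val t.
Proof. by rewrite /witness; case: constructive_indefinite_description. Qed.

Lemma witness_dom t : gdom (witness t) = gdom t.
Proof. by rewrite /= -witnessP. Qed.

Lemma witness_cod t : gcod (witness t) = gcod t.
Proof. by rewrite /= -witnessP. Qed.

Lemma letter_dom e : gdom (letter e) = gdom e. Proof. by []. Qed.
Lemma letter_cod e : gcod (letter e) = gcod e. Proof. by []. Qed.

Definition letter_homA : homA letter_graph F :=
  @comap letter_graph A id witness witness_dom witness_cod F phi.

Definition letters_pullback (G : sgd) (chi : homA letter_graph G) : homA A G :=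
  @comap A letter_graph id letter letter_dom letter_cod G chi.

Lemma letter_homA_letters w : valid w -> he letter_homA (map letter w) = he phi w.
Proof.
apply: (@homA_eq_on_letters _ _ (letters_pullback letter_homA) phi _ w) => e /=.
by have /(congr1 (fun t => t.1.2)) := witnessP (letter e).
Qed.
End LetterGraph.

Section Factorial.
Variables (A : graph) (V : sgd -> Prop) (HV : pseudovariety V) (HN : contains_N V).
Variables (L : seq (gE A) -> Prop) (HL : language L) (Hfact : factorial_lang L).
Variables (e0 : gE A) (u v : pro_edge A V) (Huv : pe_cod u = pe_dom v).
Hypothesis Hcl : in_closure L (pro_mul Huv).

Lemma product_approximation (F : sgd) (HF : V F) (phi : homA A F)
  (F' : sgd) (HF' : V F') (psi : homA A F') :
  exists wu wv, [/\ valid wu, valid wv, valid (wu ++ wv),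
    he phi wu = pe_val u HF phi & he phi wv = pe_val v HF phi] /\
    exists2 l, L l & he psi l = he psi (wu ++ wv).
Proof.
have [wu [vu _ cu phiu psiu]] := dense_at_two HV HN e0 u HF phi HF' psi.
have [wv [vv dv _ phiv psiv]] := dense_at_two HV HN e0 v HF phi HF' psi.
have vuv : valid (wu ++ wv) by apply: valid_cat; rewrite // cu dv Huv.
exists wu, wv; split => //.
have [l [Ll _ _ hl]] := Hcl [:: mk_test HF' psi].
exists l => //; rewrite homA_mul // psiu psiv; exact: hl (or_introl erefl).
Qed.

Lemma factors_attained_recognizable : recognizable V L ->
  forall (F : sgd) (HF : V F) (phi : homA A F), exists l1 l2,
    [/\ L l1, L l2, he phi l1 = pe_val u HF phi & he phi l2 = pe_val v HF phi].
Proof.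
move=> [Fr [HFr [phir recog]]] F HF phi.
have [wu [wv [[vu vv vuv phiu phiv] [l Ll psil]]]] := product_approximation HF phi HFr phir.
have Luv : L (wu ++ wv) by apply/(recog _ vuv); exists l; split.
have [Lu Lv] := Hfact (valid_nonnil vu) (valid_nonnil vv) Luv.
by exists wu, wv.
Qed.

(* Recognizing the product of two phi-fibres over the finite letter graph
   forces l itself, not just a word with the same image, to factor. *)
Lemma factors_attained_concat_closed : concat_closed V ->
  forall (F : sgd) (HF : V F) (phi : homA A F), exists l1 l2,
    [/\ L l1, L l2, he phi l1 = pe_val u HF phi & he phi l2 = pe_val v HF phi].
Proof.
move=> Hcc F HF phi.
set K1 := fibre (letter_homA phi) (pe_val u HF phi).
set K2 := fibre (letter_homA phi) (pe_val v HF phi).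
have [F' [HF' [chi recog]]] := Hcc _ (letter_graph_finite phi) K1 K2
  (@fibre_language _ _ _ _) (@fibre_language _ _ _ _)
  (fibre_recognizable HF _ _) (fibre_recognizable HF _ _).
set psi := letters_pullback chi.
have valid_letters w : valid w -> valid (map (letter phi) w).
  exact: valid_map (letter_dom phi) (letter_cod phi) w.
have [wu [wv [[vu vv vuv phiu phiv] [l Ll psil]]]] := product_approximation HF phi HF' psi.
have Kuv : concat K1 K2 (map (letter phi) (wu ++ wv)).
  split; first exact: valid_letters.
  exists (map (letter phi) wu), (map (letter phi) wv); rewrite map_cat.
  by split; split; rewrite ?valid_letters ?letter_homA_letters.
have [_ [k1 [k2 [[vk1 hk1] [vk2 hk2] hl]]]] : concat K1 K2 (map (letter phi) l).
  apply/(recog _ (valid_letters _ (HL Ll))).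
  by exists (map (letter phi) (wu ++ wv)); split => //; exact: esym psil.
have [l1 [l2 [def_l ml1 ml2]]] := map_eq_cat hl.
have nt : l1 <> [::] by move=> h; move: vk1; rewrite -ml1 h.
have nd : l2 <> [::] by move=> h; move: vk2; rewrite -ml2 h.
rewrite def_l in Ll; have [L1 L2] := Hfact nt nd Ll.
exists l1, l2; split => //.
- by rewrite -(letter_homA_letters phi (HL L1)) ml1.
- by rewrite -(letter_homA_letters phi (HL L2)) ml2.
Qed.
End Factorial.

Theorem mainTheorem8 (A : graph) (V : sgd -> Prop)
  (HV : pseudovariety V) (HN : contains_N V)
  (L : seq (gE A) -> Prop) (HL : language L) (Hfact : factorial_lang L)
  (Hcase : recognizable V L \/ concat_closed V) :
  forall (u v : pro_edge A V) (Huv : pe_cod u = pe_dom v),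
    in_closure L (pro_mul Huv) -> in_closure L u /\ in_closure L v.
Proof.
move=> u v Huv Hcl.
have [[|e0 l0] [Ll0 _ _ _]] := Hcl [::]; first by have := HL _ Ll0.
have factors_attained F (HF : V F) (phi : homA A F) : exists l1 l2,
    [/\ L l1, L l2, he phi l1 = pe_val u HF phi & he phi l2 = pe_val v HF phi].
  case: Hcase => [Hrec | Hcc].
  - exact: (factors_attained_recognizable HV HN Hfact e0 Hcl Hrec).
  - exact: (factors_attained_concat_closed HV HN HL Hfact e0 Hcl Hcc).
split; apply: (in_closure_intro HV HN HL) => F HF phi;
  have [l1 [l2 [L1 L2 h1 h2]]] := factors_attained F HF phi.
- by exists l1.
- by exists l2.
Qed.
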